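(* (i) $(I(\mathbb N),\tau_1)$ is a Polish topological semigroup, and $\rho$ is a complete metric compatible with $\tau_1$. (ii) $(I(\mathbb N),\tau_2)$ is a Polish topological semigroup, and $\rho^\ast$ is a complete metric compatible with $\tau_2$.
   Context: $I(\mathbb N)$ is the set of all bijections $f:A\to B$ with $A,B\subseteq\mathbb N$ (including the empty map), $\mathrm{dom}(f)=A$, $\mathrm{im}(f)=B$, under composition ($\mathrm{dom}(f\circ g)=g^{-1}(\mathrm{dom}(f)\cap\mathrm{im}(g))$). For $x,y$: $v(x,y)=\{f: x\in\mathrm{dom}(f), f(x)=y\}$, $w_1(x)=\{f: x\notin\mathrm{dom}(f)\}$, $w_2(y)=\{f: y\notin\mathrm{im}(f)\}$. $\tau_1$ is the topology generated by all $v(x,y)$, $w_1(x)$; $\tau_2$ by all $v(x,y)$, $w_2(y)$. For $f,g\in I(\mathbb N)$ and $n\in\mathbb N$ let $a_{(f,g)}(n)=0$ if $n\in\mathrm{dom}(f)\cap\mathrm{dom}(g)$ or $n\notin\mathrm{dom}(f)\cup\mathrm{dom}(g)$, and $a_{(f,g)}(n)=1$ otherwise; let $b_{(f,g)}(n)=\min\{1,|f(n)-g(n)|\}$ if $n\in\mathrm{dom}(f)\cap\mathrm{dom}(g)$ and $0$ otherwise. Define $\rho(f,g)=\sum_{n\in\mathbb N}\frac{a_{(f,g)}(n)+b_{(f,g)}(n)}{2^n}$ and $\rho^\ast(f,g)=\rho(f^{-1},g^{-1})$. *)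

From Stdlib Require Import Reals List ClassicalEpsilon.
From Coquelicot Require Import Coquelicot.
Open Scope R_scope.

(* A partial bijection f : A -> B with A, B subsets of nat is represented by
   its graph as a partial function nat -> option nat which is injective on
   its domain.  dom f = {n | pf f n <> None}, im f = {m | exists n, pf f n = Some m}. *)
Record PI : Type := mkPI {
  pf : nat -> option nat ;
  pf_inj : forall x y z, pf x = Some z -> pf y = Some z -> x = y }.

Definition dom (f : PI) (n : nat) : Prop := pf f n <> None.
Definition im (f : PI) (m : nat) : Prop := exists n, pf f n = Some m.

Definition comp_fun (f g : PI) (n : nat) : option nat :=
  match pf g n with Some m => pf f m | None => None end.

Lemma comp_inj (f g : PI) : forall x y z,
  comp_fun f g x = Some z -> comp_fun f g y = Some z -> x = y.
Proof.
  intros x y z; unfold comp_fun.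
  destruct (pf g x) as [a|] eqn:Ha; [|discriminate].
  destruct (pf g y) as [b|] eqn:Hb; [|discriminate].
  intros H1 H2. assert (a = b) by (eapply (pf_inj f); eauto). subst b.
  eapply (pf_inj g); eauto.
Qed.

Definition comp (f g : PI) : PI := mkPI (comp_fun f g) (comp_inj f g).

Definition inv_fun (f : PI) (m : nat) : option nat :=
  match excluded_middle_informative (exists n, pf f n = Some m) with
  | left H => Some (proj1_sig (constructive_indefinite_description _ H))
  | right _ => None
  end.

Lemma inv_inj (f : PI) : forall x y z,
  inv_fun f x = Some z -> inv_fun f y = Some z -> x = y.
Proof.
  intros x y z; unfold inv_fun.
  destruct (excluded_middle_informative (exists n, pf f n = Some x)) as [Hx|];
    [|discriminate].
  destruct (excluded_middle_informative (exists n, pf f n = Some y)) as [Hy|];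
    [|discriminate].
  destruct (constructive_indefinite_description _ Hx) as [a Ha].
  destruct (constructive_indefinite_description _ Hy) as [b Hb].
  simpl. intros E1 E2. injection E1; injection E2; intros; subst.
  rewrite Ha in Hb. injection Hb; auto.
Qed.

Definition inv (f : PI) : PI := mkPI (inv_fun f) (inv_inj f).

Definition v (x y : nat) (f : PI) : Prop := pf f x = Some y.
Definition w1 (x : nat) (f : PI) : Prop := ~ dom f x.
Definition w2 (y : nat) (f : PI) : Prop := ~ im f y.

Definition subbasis1 (S : PI -> Prop) : Prop :=
  (exists x y, S = v x y) \/ (exists x, S = w1 x).
Definition subbasis2 (S : PI -> Prop) : Prop :=
  (exists x y, S = v x y) \/ (exists y, S = w2 y).

Definition generated_open (B : (PI -> Prop) -> Prop) (U : PI -> Prop) : Prop :=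
  forall f, U f -> exists l : list (PI -> Prop),
    List.Forall B l /\ (forall S, In S l -> S f) /\
    (forall h, (forall S, In S l -> S h) -> U h).

Definition tau1 : (PI -> Prop) -> Prop := generated_open subbasis1.
Definition tau2 : (PI -> Prop) -> Prop := generated_open subbasis2.

Definition is_metric (d : PI -> PI -> R) : Prop :=
  (forall x y, 0 <= d x y) /\
  (forall x y, d x y = 0 <-> x = y) /\
  (forall x y, d x y = d y x) /\
  (forall x y z, d x z <= d x y + d y z).

Definition metric_complete (d : PI -> PI -> R) : Prop :=
  forall u : nat -> PI,
    (forall eps, 0 < eps -> exists N, forall m n, (N <= m)%nat -> (N <= n)%nat ->
        d (u m) (u n) < eps) ->
    exists l, forall eps, 0 < eps -> exists N, forall n, (N <= n)%nat -> d (u n) l < eps.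

Definition metric_open (d : PI -> PI -> R) (U : PI -> Prop) : Prop :=
  forall x, U x -> exists eps, 0 < eps /\ forall y, d x y < eps -> U y.

Definition compatible (d : PI -> PI -> R) (tau : (PI -> Prop) -> Prop) : Prop :=
  forall U, tau U <-> metric_open d U.

(* separable: a countable dense subset (enumerated by a sequence; I(N) is nonempty) *)
Definition separable (tau : (PI -> Prop) -> Prop) : Prop :=
  exists D : nat -> PI, forall U, tau U -> (exists x, U x) -> exists n, U (D n).

Definition polish (tau : (PI -> Prop) -> Prop) : Prop :=
  separable tau /\
  exists d, is_metric d /\ metric_complete d /\ compatible d tau.

Definition topological_semigroup (tau : (PI -> Prop) -> Prop) : Prop :=
  (forall f g h, comp f (comp g h) = comp (comp f g) h) /\
  (forall f g W, tau W -> W (comp f g) ->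
     exists U V, tau U /\ tau V /\ U f /\ V g /\
       forall f' g', U f' -> V g' -> W (comp f' g')).

Definition a_fg (f g : PI) (n : nat) : R :=
  match pf f n, pf g n with
  | Some _, Some _ => 0
  | None, None => 0
  | _, _ => 1
  end.

Definition b_fg (f g : PI) (n : nat) : R :=
  match pf f n, pf g n with
  | Some x, Some y => Rmin 1 (Rabs (INR x - INR y))
  | _, _ => 0
  end.

Definition rho (f g : PI) : R :=
  Series (fun n => (a_fg f g n + b_fg f g n) / 2 ^ n).

Definition rho_star (f g : PI) : R := rho (inv f) (inv g).

(* Since two distinct naturals are at distance >= 1,
   a(f,g)(n) + b(f,g)(n) is the discrete distance between the values f(n)
   and g(n) in option nat (an undefined value counting as a point), so
   rho f g = sum_n disc(f n, g n) / 2^n.  Consequently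
     rho f g < 2^-N  ==>  f, g agree on {0..N}  ==>  rho f g <= 2^-N,
   i.e. the rho-balls are the "cylinders" of partial bijections agreeing
   with a given one on an initial segment.  A subbasic set v(x,y), w1(x)
   only depends on the value at x, and every cylinder is a finite
   intersection of such sets, so tau1 is the cylinder topology too; this
   gives compatibility.  Completeness: a Cauchy sequence is eventually
   constant at every coordinate, and the coordinatewise limit is again
   injective.  Composition is continuous because a value of g o f on
   {0..N} only depends on f on {0..N} and on g below a bound.  Finitely
   supported partial bijections, enumerated via the Cantor pairing, are
   dense.  Part (ii) is part (i) transported along the involution
   f |-> f^-1, which exchanges the roles of domains and images and
   reverses composition. *)

From Stdlib Require Import Reals Lra Lia Cantor List ProofIrrelevance
  FunctionalExtensionality ClassicalEpsilon.
From Coquelicot Require Import Coquelicot.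
Open Scope R_scope.

Definition wsum (c : nat -> R) : R := Series (fun n => c n * (/2) ^ n).

Definition unit_bounded (c : nat -> R) : Prop := forall n, 0 <= c n <= 1.

Lemma half_pow_pos n : 0 < (/2) ^ n.
Proof. apply pow_lt; lra. Qed.

Lemma half_pow_antitone N k : (k <= N)%nat -> (/2) ^ N <= (/2) ^ k.
Proof.
  intros Hk. rewrite !pow_inv.
  apply Rinv_le_contravar; [apply pow_lt; lra | apply Rle_pow; lra || lia].
Qed.

Lemma half_pow_small eps : 0 < eps -> exists N, (/2) ^ N < eps.
Proof.
  intros Heps. destruct (pow_lt_1_zero (/2)) with (y := eps) as [N HN];
    [rewrite Rabs_pos_eq; lra | exact Heps |].
  exists N. specialize (HN N (le_n _)).
  rewrite Rabs_pos_eq in HN; [exact HN | left; apply half_pow_pos].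
Qed.

Lemma is_series_half_pow : is_series (fun n => (/2) ^ n) 2.
Proof.
  assert (Hgeom : is_series (fun n => (/2) ^ n) (/ (1 - /2)))
    by (apply is_series_geom; rewrite Rabs_pos_eq; lra).
  replace (/ (1 - /2)) with 2 in Hgeom by field. exact Hgeom.
Qed.

Lemma ex_wsum c M : (forall n, 0 <= c n <= M) -> ex_series (fun n => c n * (/2) ^ n).
Proof.
  intros Hc.
  apply (@ex_series_le R_AbsRing R_CompleteNormedModule _ (fun n => M * (/2) ^ n)).
  - intros n. change (norm (c n * (/2) ^ n)) with (Rabs (c n * (/2) ^ n)).
    pose proof (half_pow_pos n). specialize (Hc n).
    rewrite Rabs_pos_eq by nra. nra.
  - exists (M * 2). apply (is_series_scal_l M _ 2), is_series_half_pow.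
Qed.

Lemma Series_nonneg a : (forall n, 0 <= a n) -> ex_series a -> 0 <= Series a.
Proof.
  intros Ha Hex.
  replace 0 with (Series (fun n => 0 * a n)) by (rewrite Series_scal_l; ring).
  apply Series_le; [intros n; specialize (Ha n); lra | exact Hex].
Qed.

Lemma wsum_nonneg c : unit_bounded c -> 0 <= wsum c.
Proof.
  intros Hc. apply Series_nonneg; [| apply (ex_wsum c 1 Hc)].
  intros n. pose proof (half_pow_pos n). specialize (Hc n). nra.
Qed.

Lemma wsum_zero c : (forall n, c n = 0) -> wsum c = 0.
Proof.
  intros Hc. unfold wsum.
  rewrite (Series_ext _ (fun n => 0 * (/2) ^ n)) by (intros n; rewrite Hc; ring).
  rewrite Series_scal_l. ring.
Qed.

Lemma wsum_term_le c k : unit_bounded c -> c k * (/2) ^ k <= wsum c.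
Proof.
  intros Hc. set (a := fun n => c n * (/2) ^ n).
  assert (Ha : forall n, 0 <= a n).
  { intros n. pose proof (half_pow_pos n). specialize (Hc n). unfold a; nra. }
  assert (Hex : ex_series a) by apply (ex_wsum c 1 Hc).
  unfold wsum. fold a. rewrite (Series_incr_n a (S k)) by (auto; lia). simpl pred.
  assert (Hpartial : a k <= sum_f_R0 a k).
  { destruct k as [|k]; simpl; [lra |].
    pose proof (cond_pos_sum a k Ha). lra. }
  assert (Htail : 0 <= Series (fun j => a (S k + j)%nat)).
  { apply Series_nonneg; [intros; apply Ha | apply (ex_series_incr_n a (S k)), Hex]. }
  fold (a k). lra.
Qed.

Lemma wsum_tail_le c N :
  unit_bounded c -> (forall n, (n <= N)%nat -> c n = 0) -> wsum c <= (/2) ^ N.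
Proof.
  intros Hc H0. unfold wsum.
  rewrite (Series_incr_n_aux _ (S N)) by (intros k Hk; rewrite H0 by lia; ring).
  apply Rle_trans with (Series (fun k => (/2) ^ (S N) * (/2) ^ k)).
  - apply Series_le.
    + intros n. rewrite <- pow_add. pose proof (half_pow_pos (S N + n)).
      specialize (Hc (S N + n)%nat). split; nra.
    + exists ((/2) ^ (S N) * 2). apply (is_series_scal_l _ _ 2), is_series_half_pow.
  - rewrite Series_scal_l.
    replace (Series (pow (/2))) with 2 by (symmetry; apply (is_series_unique _ _ is_series_half_pow)).
    simpl. right; field.
Qed.

Lemma wsum_triangle c1 c2 c3 :
  unit_bounded c1 -> unit_bounded c2 -> unit_bounded c3 ->
  (forall n, c1 n <= c2 n + c3 n) -> wsum c1 <= wsum c2 + wsum c3.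
Proof.
  intros H1 H2 H3 H. unfold wsum.
  rewrite <- Series_plus by (apply (ex_wsum _ 1); assumption).
  apply Series_le.
  - intros n. pose proof (half_pow_pos n). specialize (H n). specialize (H1 n). split; nra.
  - apply (ex_series_ext (fun n => (c2 n + c3 n) * (/2) ^ n)); [intros; simpl; ring |].
    apply (ex_wsum _ 2). intros n. specialize (H2 n). specialize (H3 n). lra.
Qed.

(** * rho as a weighted sum of discrete distances *)

Definition option_nat_eq_dec (o1 o2 : option nat) : {o1 = o2} + {o1 <> o2}.
Proof. decide equality. apply Nat.eq_dec. Defined.

Definition disc (o1 o2 : option nat) : R := if option_nat_eq_dec o1 o2 then 0 else 1.

Lemma disc_bounded o1 o2 : 0 <= disc o1 o2 <= 1.
Proof. unfold disc; destruct option_nat_eq_dec; lra. Qed.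

Lemma disc_eq0 o1 o2 : disc o1 o2 = 0 <-> o1 = o2.
Proof. unfold disc; destruct option_nat_eq_dec; split; intros; (lra || tauto). Qed.

Lemma disc_neq o1 o2 : o1 <> o2 -> disc o1 o2 = 1.
Proof. unfold disc; destruct option_nat_eq_dec; tauto. Qed.

Lemma disc_sym o1 o2 : disc o1 o2 = disc o2 o1.
Proof.
  unfold disc; destruct (option_nat_eq_dec o1 o2), (option_nat_eq_dec o2 o1);
    congruence.
Qed.

Lemma disc_triangle o1 o2 o3 : disc o1 o3 <= disc o1 o2 + disc o2 o3.
Proof.
  unfold disc; destruct (option_nat_eq_dec o1 o3), (option_nat_eq_dec o1 o2),
    (option_nat_eq_dec o2 o3); subst; try congruence; lra.
Qed.

(* Distinct naturals are at distance at least 1, so b(f,g)(n) is 0 or 1. *)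
Lemma Rmin_one_dist_nat x y : x <> y -> Rmin 1 (Rabs (INR x - INR y)) = 1.
Proof.
  intros Hxy. apply Rmin_left.
  destruct (Nat.lt_gt_cases x y) as [[Hlt | Hlt] _]; [exact Hxy | |];
    apply le_INR in Hlt; rewrite S_INR in Hlt.
  - rewrite Rabs_left; lra.
  - rewrite Rabs_right; lra.
Qed.

Lemma a_plus_b_disc f g n : a_fg f g n + b_fg f g n = disc (pf f n) (pf g n).
Proof.
  unfold a_fg, b_fg, disc.
  destruct (pf f n) as [x|], (pf g n) as [y|];
    destruct option_nat_eq_dec as [E | NE]; try discriminate; try lra.
  - injection E as ->. rewrite Rminus_diag, Rabs_R0, Rmin_right; lra.
  - rewrite Rmin_one_dist_nat by congruence. lra.
  - contradiction.
Qed.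

Lemma rho_as_wsum f g : rho f g = wsum (fun n => disc (pf f n) (pf g n)).
Proof.
  apply Series_ext. intros n. rewrite a_plus_b_disc, pow_inv. reflexivity.
Qed.

(** * rho-balls are cylinders *)

Definition agree (N : nat) (p q : nat -> option nat) : Prop :=
  forall k, (k <= N)%nat -> p k = q k.

Lemma agree_sym N p q : agree N p q -> agree N q p.
Proof. intros H k Hk. symmetry. auto. Qed.

Lemma agree_trans N p q r : agree N p q -> agree N q r -> agree N p r.
Proof. intros H1 H2 k Hk. rewrite H1; auto. Qed.

Lemma rho_le_of_agree N f g : agree N (pf f) (pf g) -> rho f g <= (/2) ^ N.
Proof.
  intros H. rewrite rho_as_wsum.
  apply wsum_tail_le; [intros n; apply disc_bounded |].
  intros n Hn. apply disc_eq0. auto.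
Qed.

Lemma agree_of_rho_lt N f g : rho f g < (/2) ^ N -> agree N (pf f) (pf g).
Proof.
  intros H k Hk. destruct (option_nat_eq_dec (pf f k) (pf g k)) as [E | NE]; [exact E |].
  exfalso.
  pose proof (wsum_term_le _ k (fun n => disc_bounded (pf f n) (pf g n))) as L.
  cbv beta in L. rewrite disc_neq, <- rho_as_wsum in L by exact NE.
  pose proof (half_pow_antitone N k Hk). lra.
Qed.

Lemma PI_ext f g : (forall n, pf f n = pf g n) -> f = g.
Proof.
  destruct f as [p1 i1], g as [p2 i2]; simpl; intros H.
  assert (p1 = p2) by (apply functional_extensionality; exact H). subst.
  f_equal. apply proof_irrelevance.
Qed.

Lemma rho_metric : is_metric rho.
Proof.
  split; [| split; [| split]].
  - intros f g. rewrite rho_as_wsum. apply wsum_nonneg. intros n; apply disc_bounded.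
  - intros f g; split.
    + intros H. apply PI_ext. intros n. apply disc_eq0.
      pose proof (wsum_term_le _ n (fun n => disc_bounded (pf f n) (pf g n))) as L.
      rewrite <- rho_as_wsum, H in L.
      pose proof (half_pow_pos n). pose proof (disc_bounded (pf f n) (pf g n)). nra.
    + intros ->. rewrite rho_as_wsum. apply wsum_zero. intros n. apply disc_eq0. reflexivity.
  - intros f g. rewrite !rho_as_wsum. unfold wsum.
    apply Series_ext. intros n. rewrite disc_sym. reflexivity.
  - intros f g h. rewrite !rho_as_wsum.
    apply wsum_triangle; try (intros n; apply disc_bounded).
    intros n. apply disc_triangle.
Qed.

Lemma comp_some f g x z :
  pf (comp f g) x = Some z <-> exists m, pf g x = Some m /\ pf f m = Some z.
Proof.
  simpl. unfold comp_fun. destruct (pf g x) as [m|].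
  - split; [eauto | intros [m' [E1 E2]]; injection E1 as ->; exact E2].
  - split; [discriminate | intros [m' [E _]]; discriminate].
Qed.

Lemma comp_assoc f g h : comp f (comp g h) = comp (comp f g) h.
Proof.
  apply PI_ext. intros n. simpl. unfold comp_fun. simpl. unfold comp_fun.
  destruct (pf h n); reflexivity.
Qed.

Lemma inv_spec f m n : pf (inv f) m = Some n <-> pf f n = Some m.
Proof.
  simpl. unfold inv_fun.
  destruct (excluded_middle_informative (exists n, pf f n = Some m)) as [Hm | Hm].
  - destruct (constructive_indefinite_description _ Hm) as [a Ha]. simpl.
    split; [intros E; injection E as <-; exact Ha |].
    intros E. f_equal. eapply (pf_inj f); eauto.
  - split; [discriminate | intros E; exfalso; eauto].
Qed.

Lemma inv_none f m : pf (inv f) m = None <-> ~ im f m.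
Proof.
  unfold im. split.
  - intros H [n Hn]. apply (proj2 (inv_spec f m n)) in Hn. congruence.
  - intros H. destruct (pf (inv f) m) as [n|] eqn:E; [| reflexivity].
    apply (proj1 (inv_spec f m n)) in E. exfalso. eauto.
Qed.

Lemma option_ext (o1 o2 : option nat) : (forall x, o1 = Some x <-> o2 = Some x) -> o1 = o2.
Proof.
  intros H. destruct o1 as [a|], o2 as [b|].
  - apply H. reflexivity.
  - discriminate (proj1 (H a) eq_refl).
  - discriminate (proj2 (H b) eq_refl).
  - reflexivity.
Qed.

Lemma inv_inv f : inv (inv f) = f.
Proof.
  apply PI_ext. intros n. apply option_ext. intros x. rewrite !inv_spec. tauto.
Qed.

Lemma inv_comp f g : inv (comp f g) = comp (inv g) (inv f).
Proof.
  apply PI_ext. intros n. apply option_ext. intros x.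
  rewrite inv_spec, !comp_some. split.
  - intros [m [E1 E2]]. exists m. rewrite !inv_spec. auto.
  - intros [m [E1 E2]]. rewrite inv_spec in E1, E2. eauto.
Qed.

Lemma rho_star_metric : is_metric rho_star.
Proof.
  destruct rho_metric as [Hpos [Hsep [Hsym Htri]]]. unfold rho_star.
  split; [| split; [| split]]; intros; auto.
  split.
  - intros H. apply Hsep in H. rewrite <- (inv_inv x), <- (inv_inv y), H. reflexivity.
  - intros ->. apply Hsep. reflexivity.
Qed.

(** * Cylinder topologies *)

(* Open sets of the topology in which f is determined by the coordinates
   c f : nat -> option nat (c = pf for tau1, c = pf o inv for tau2). *)
Definition cylinder_open (c : PI -> nat -> option nat) (U : PI -> Prop) : Prop :=
  forall f, U f -> exists N, forall g, agree N (c g) (c f) -> U g.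

Lemma cylinder_open_cylinder c M f0 : cylinder_open c (fun h => agree M (c h) (c f0)).
Proof. intros h Hh. exists M. intros g Hg. eapply agree_trans; eauto. Qed.

Lemma metric_open_cylinder (phi : PI -> PI) U :
  metric_open (fun f g => rho (phi f) (phi g)) U <-> cylinder_open (fun f => pf (phi f)) U.
Proof.
  split.
  - intros H f Hf. destruct (H f Hf) as [eps [Heps HU]].
    destruct (half_pow_small eps Heps) as [N HN]. exists N. intros g Hg.
    apply HU. apply agree_sym, rho_le_of_agree in Hg. lra.
  - intros H f Hf. destruct (H f Hf) as [N HN]. exists ((/2) ^ N).
    split; [apply half_pow_pos |].
    intros g Hg. apply HN, agree_sym, agree_of_rho_lt, Hg.
Qed.

Section GeneratedTopology.

(* A subbasis whose members each depend on one coordinate, and which can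
   pin down every single coordinate, generates the cylinder topology. *)
Variable B : (PI -> Prop) -> Prop.
Variable c : PI -> nat -> option nat.
Hypothesis subbasic_local :
  forall S, B S -> exists k, forall f g, S f -> c g k = c f k -> S g.
Hypothesis subbasic_pins :
  forall f k, exists S, B S /\ S f /\ forall g, S g -> c g k = c f k.

Lemma finite_intersection_local l f :
  List.Forall B l -> (forall S, In S l -> S f) ->
  exists N, forall g, agree N (c g) (c f) -> forall S, In S l -> S g.
Proof.
  induction l as [|S l IH]; intros HB Hf.
  - exists 0%nat. intros g _ S [].
  - inversion HB as [| ? ? HS HB']; subst.
    destruct IH as [N HN]; [exact HB' | intros S' HS'; apply Hf; right; exact HS' |].
    destruct (subbasic_local S HS) as [k Hk]. exists (Nat.max k N).
    intros g Hg S' [<- | HS'].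
    + apply (Hk f); [apply Hf; left; reflexivity | apply Hg; lia].
    + apply HN; [intros j Hj; apply Hg; lia | exact HS'].
Qed.

Lemma cylinder_finite_intersection f N :
  exists l, List.Forall B l /\ (forall S, In S l -> S f) /\
    forall g, (forall S, In S l -> S g) -> agree N (c g) (c f).
Proof.
  induction N as [|N [l [HB [Hf Hl]]]].
  - destruct (subbasic_pins f 0%nat) as [P [HP [Pf Pg]]].
    exists (P :: nil). split; [constructor; auto |]. split; [intros S' [<- | []]; exact Pf |].
    intros g Hg k Hk. replace k with 0%nat by lia. apply Pg, Hg. left; reflexivity.
  - destruct (subbasic_pins f (S N)) as [P [HP [Pf Pg]]].
    exists (P :: l). split; [constructor; auto |].
    split; [intros S' [<- | HS']; [exact Pf | apply Hf, HS'] |].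
    intros g Hg k Hk. destruct (Nat.eq_dec k (S N)) as [-> | Hne].
    + apply Pg, Hg. left; reflexivity.
    + apply Hl; [intros S' HS'; apply Hg; right; exact HS' | lia].
Qed.

Lemma generated_open_cylinder U : generated_open B U <-> cylinder_open c U.
Proof.
  split.
  - intros H f Hf. destruct (H f Hf) as [l [HB [Hl HU]]].
    destruct (finite_intersection_local l f HB Hl) as [N HN].
    exists N. intros g Hg. apply HU, HN, Hg.
  - intros H f Hf. destruct (H f Hf) as [N HN].
    destruct (cylinder_finite_intersection f N) as [l [HB [Hl Hcyl]]].
    exists l. split; [exact HB |]. split; [exact Hl |]. intros g Hg. apply HN, Hcyl, Hg.
Qed.

End GeneratedTopology.

(* tau1 is the cylinder topology of the graphs: v(x,y) and w1(x) only
   depend on the value at x, and they pin that value down. *)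
Lemma tau1_cylinder U : tau1 U <-> cylinder_open pf U.
Proof.
  apply generated_open_cylinder.
  - intros S [[x [y ->]] | [x ->]]; exists x; unfold v, w1, dom; intros f g Hf E;
      rewrite E; exact Hf.
  - intros f k. destruct (pf f k) as [y|] eqn:E.
    + exists (v k y). split; [left; eauto |]. split; [exact E |].
      unfold v. intros g Hg. congruence.
    + exists (w1 k). split; [right; eauto |]. unfold w1, dom. split; [tauto |].
      intros g Hg. destruct (pf g k); [exfalso; apply Hg; discriminate | reflexivity].
Qed.

(* tau2 is the cylinder topology of the inverse graphs: v(x,y) and w2(y)
   only depend on the value of the inverse at y. *)
Lemma tau2_cylinder U : tau2 U <-> cylinder_open (fun f => pf (inv f)) U.
Proof.
  apply generated_open_cylinder.
  - intros S [[x [y ->]] | [y ->]]; exists y; unfold v, w2; intros f g Hf E.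
    + apply inv_spec. rewrite E. apply inv_spec, Hf.
    + apply inv_none. rewrite E. apply inv_none, Hf.
  - intros f k. destruct (pf (inv f) k) as [x|] eqn:E.
    + exists (v x k). split; [left; eauto |]. split; [apply inv_spec, E |].
      unfold v. intros g Hg. apply inv_spec in Hg. congruence.
    + exists (w2 k). split; [right; eauto |]. split; [apply inv_none, E |].
      unfold w2. intros g Hg. apply inv_none in Hg. congruence.
Qed.

Lemma compatible_rho : compatible rho tau1.
Proof.
  intros U. rewrite tau1_cylinder. symmetry. apply (metric_open_cylinder (fun f => f)).
Qed.

Lemma compatible_rho_star : compatible rho_star tau2.
Proof.
  intros U. rewrite tau2_cylinder. symmetry. apply (metric_open_cylinder inv).
Qed.

(** * Completeness *)

(* A sequence that eventually agrees with itself on every initial segment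
   converges coordinatewise; the limit is injective because any two of its
   values are already taken by a single member of the sequence. *)
Lemma limit_of_eventually_agreeing (u : nat -> PI) :
  (forall k, exists N, forall m n, (N <= m)%nat -> (N <= n)%nat -> agree k (pf (u m)) (pf (u n))) ->
  exists l, forall N, exists M, forall n, (M <= n)%nat -> agree N (pf (u n)) (pf l).
Proof.
  intros Hc. apply choice in Hc as [Nf HNf].
  set (p := fun k => pf (u (Nf k)) k).
  assert (Hp : forall k n, (Nf k <= n)%nat -> pf (u n) k = p k).
  { intros k n Hn. apply (HNf k); lia. }
  assert (Hinj : forall x y z, p x = Some z -> p y = Some z -> x = y).
  { intros x y z Hx Hy.
    rewrite <- (Hp x (Nat.max (Nf x) (Nf y))) in Hx by lia.
    rewrite <- (Hp y (Nat.max (Nf x) (Nf y))) in Hy by lia.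
    eapply pf_inj; eauto. }
  exists (mkPI p Hinj). intros N. exists (Nf N). intros n Hn k Hk. simpl.
  rewrite <- (Hp k (Nat.max n (Nf k))) by lia.
  apply (HNf N); lia.
Qed.

Lemma complete_rho : metric_complete rho.
Proof.
  intros u Hcauchy.
  destruct (limit_of_eventually_agreeing u) as [l Hl].
  - intros k. destruct (Hcauchy ((/2) ^ k) (half_pow_pos k)) as [N HN].
    exists N. intros m n Hm Hn. apply agree_of_rho_lt, HN; assumption.
  - exists l. intros eps Heps. destruct (half_pow_small eps Heps) as [N HN].
    destruct (Hl N) as [M HM]. exists M. intros n Hn.
    pose proof (rho_le_of_agree N _ _ (HM n Hn)). lra.
Qed.

Lemma complete_rho_star : metric_complete rho_star.
Proof.
  intros u Hcauchy. destruct (complete_rho (fun n => inv (u n)) Hcauchy) as [l Hl].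
  exists (inv l). intros eps Heps. destruct (Hl eps Heps) as [N HN].
  exists N. intros n Hn. unfold rho_star. rewrite inv_inv. auto.
Qed.

(** * Continuity of composition *)

Lemma values_bounded (g : PI) N :
  exists Bd, forall k m, (k <= N)%nat -> pf g k = Some m -> (m <= Bd)%nat.
Proof.
  induction N as [|N [Bd HBd]].
  - exists (match pf g 0%nat with Some m => m | None => 0%nat end).
    intros k m Hk Hm. replace k with 0%nat in Hm by lia. rewrite Hm. lia.
  - exists (Nat.max Bd (match pf g (S N) with Some m => m | None => 0%nat end)).
    intros k m Hk Hm. destruct (Nat.eq_dec k (S N)) as [-> | Hne].
    + rewrite Hm. lia.
    + specialize (HBd k m ltac:(lia) Hm). lia.
Qed.

Lemma comp_agree a b N :
  exists M1, forall a' b', agree M1 (pf a') (pf a) -> agree N (pf b') (pf b) ->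
    agree N (pf (comp a' b')) (pf (comp a b)).
Proof.
  destruct (values_bounded b N) as [Bd HBd]. exists Bd.
  intros a' b' Ha Hb k Hk. simpl. unfold comp_fun. rewrite (Hb k Hk).
  destruct (pf b k) as [m|] eqn:E; [apply Ha; eapply HBd; eauto | reflexivity].
Qed.

Lemma semigroup_tau1 : topological_semigroup tau1.
Proof.
  split; [exact comp_assoc |].
  intros f g W HW Hfg. destruct (proj1 (tau1_cylinder W) HW _ Hfg) as [N HN].
  destruct (comp_agree f g N) as [M HM].
  exists (fun h => agree M (pf h) (pf f)), (fun h => agree N (pf h) (pf g)).
  split; [apply tau1_cylinder, cylinder_open_cylinder |].
  split; [apply tau1_cylinder, cylinder_open_cylinder |].
  split; [intros k _; reflexivity |]. split; [intros k _; reflexivity |].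
  intros f' g' Hf Hg. apply HN, HM; assumption.
Qed.

(* For tau2, continuity follows from inv (f o g) = inv g o inv f. *)
Lemma semigroup_tau2 : topological_semigroup tau2.
Proof.
  split; [exact comp_assoc |].
  intros f g W HW Hfg. destruct (proj1 (tau2_cylinder W) HW _ Hfg) as [N HN].
  destruct (comp_agree (inv g) (inv f) N) as [M HM].
  exists (fun h => agree N (pf (inv h)) (pf (inv f))),
         (fun h => agree M (pf (inv h)) (pf (inv g))).
  split; [apply tau2_cylinder, (cylinder_open_cylinder (fun h => pf (inv h))) |].
  split; [apply tau2_cylinder, (cylinder_open_cylinder (fun h => pf (inv h))) |].
  split; [intros k _; reflexivity |]. split; [intros k _; reflexivity |].
  intros f' g' Hf Hg. apply HN. rewrite !inv_comp. apply HM; assumption.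
Qed.

(** * Separability *)

Fixpoint decode_list (len c : nat) : list nat :=
  match len with
  | 0 => nil
  | S len => fst (of_nat c) :: decode_list len (snd (of_nat c))
  end.

Lemma decode_list_surj s : exists c, decode_list (length s) c = s.
Proof.
  induction s as [|a s [c Hc]]; [exists 0%nat; reflexivity |].
  exists (to_nat (a, c)). cbn [length decode_list].
  rewrite cancel_of_to. cbn [fst snd]. rewrite Hc. reflexivity.
Qed.

(* A list read as a finite partial map: entry S m means value m, 0 means undefined. *)
Definition list_graph (s : list nat) (k : nat) : option nat :=
  match nth_error s k with Some (S m) => Some m | _ => None end.

Lemma empty_graph_inj : forall x y z : nat,
  (fun _ : nat => @None nat) x = Some z -> (fun _ : nat => @None nat) y = Some z -> x = y.
Proof. discriminate. Qed.

Definition emptyPI : PI := mkPI (fun _ => None) empty_graph_inj.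

(* An enumeration of all finitely supported partial bijections. *)
Definition finite_PI (n : nat) : PI :=
  let (len, c) := of_nat n in
  let p := list_graph (decode_list len c) in
  match excluded_middle_informative (forall x y z, p x = Some z -> p y = Some z -> x = y) with
  | left H => mkPI p H
  | right _ => emptyPI
  end.

Lemma finite_PI_dense f N : exists n, agree N (pf (finite_PI n)) (pf f).
Proof.
  set (s := map (fun k => match pf f k with Some m => S m | None => 0%nat end) (seq 0 (S N))).
  assert (Hs : forall k, list_graph s k = if Nat.leb k N then pf f k else None).
  { intros k. unfold list_graph, s. rewrite nth_error_map, nth_error_seq.
    destruct (Nat.ltb_spec k (S N)), (Nat.leb_spec k N); try lia; simpl; [| reflexivity].
    destruct (pf f k); reflexivity. }
  destruct (decode_list_surj s) as [c Hc].
  replace (length s) with (S N) in Hc by (unfold s; rewrite length_map, length_seq; reflexivity).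
  exists (to_nat (S N, c)). unfold finite_PI. rewrite cancel_of_to, Hc.
  destruct excluded_middle_informative as [Hinj | Hninj].
  - intros k Hk. simpl. rewrite Hs. destruct (Nat.leb_spec k N); [reflexivity | lia].
  - exfalso. apply Hninj. intros x y z Hx Hy. rewrite Hs in Hx, Hy.
    destruct (Nat.leb x N), (Nat.leb y N); try discriminate. eapply pf_inj; eauto.
Qed.

Lemma separable_tau1 : separable tau1.
Proof.
  exists finite_PI. intros U HU [f Hf].
  destruct (proj1 (tau1_cylinder U) HU f Hf) as [N HN].
  destruct (finite_PI_dense f N) as [n Hn]. exists n. apply HN, Hn.
Qed.

Lemma separable_tau2 : separable tau2.
Proof.
  exists (fun n => inv (finite_PI n)). intros U HU [f Hf].
  destruct (proj1 (tau2_cylinder U) HU f Hf) as [N HN].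
  destruct (finite_PI_dense (inv f) N) as [n Hn]. exists n. apply HN. rewrite inv_inv. exact Hn.
Qed.

Theorem theorem4p3 :
  (polish tau1 /\ topological_semigroup tau1 /\
   is_metric rho /\ metric_complete rho /\ compatible rho tau1) /\
  (polish tau2 /\ topological_semigroup tau2 /\
   is_metric rho_star /\ metric_complete rho_star /\ compatible rho_star tau2).
Proof.
  pose proof (conj rho_metric (conj complete_rho compatible_rho)) as Hrho.
  pose proof (conj rho_star_metric (conj complete_rho_star compatible_rho_star)) as Hrho_star.
  split; (split; [split |]).
  - exact separable_tau1.
  - exists rho. exact Hrho.
  - exact (conj semigroup_tau1 Hrho).
  - exact separable_tau2.
  - exists rho_star. exact Hrho_star.
  - exact (conj semigroup_tau2 Hrho_star).
Qed.
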